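(* For every integer $p\ge1$ and every $s\in\mathbb{C}^k$, $$\nabla A(s)^p-A(s)^p\nabla+pA(s)^{p-1}=(-1)^{k-1}\partial_{s_k}\big(A(s)^p\big)\,P'_s(A(s)).$$
   Context: Fix an integer $k\ge 2$, coordinates $s=(s_1,\dots,s_k)$ on $\mathbb{C}^k$, $s_0:=1$, $P_s(z):=\sum_{h=0}^k(-1)^hs_hz^{k-h}$. $A(s)$ is the $(k,k)$ companion matrix with $A_{i,i+1}=1$ for $i\in[1,k-1]$, last row $A_{k,j}=(-1)^{k-j}s_{k+1-j}$ for $j\in[1,k]$, all other entries $0$. $P'_s(A(s)):=\sum_{h=0}^{k-1}(-1)^h(k-h)s_hA(s)^{k-h-1}$. $\nabla$ is the constant $(k,k)$ matrix with $\nabla_{i+1,i}=i$ for $i\in[1,k-1]$ and all other entries $0$. *)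

From mathcomp Require Import all_boot all_order all_algebra.
From mathcomp Require Import complex.
From mathcomp Require Import reals.
Set Implicit Arguments. Unset Strict Implicit. Unset Printing Implicit Defensive.
Import Order.TTheory GRing.Theory Num.Theory.
Local Open Scope ring_scope.

(* Coordinates: s = [:: s_1; ...; s_k] (a sequence of length k);
   scoord s h = s_h for 1 <= h <= k, and s_0 = 1. *)
Definition scoord (R : ringType) (s : seq R) (h : nat) : R := (1 :: s)`_h.

(* Companion matrix A(s), 0-based indices:
   A i (i+1) = 1 for i < k-1 ;  A (k-1) j = (-1)^(k-1-j) s_(k-j) ;  0 else.
   (1-based: A_{i,i+1} = 1, A_{k,j} = (-1)^{k-j} s_{k+1-j}.) *)
Definition companion (R : ringType) (k : nat) (s : seq R) : 'M[R]_k :=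
  \matrix_(i < k, j < k)
    if (i.+1 == j)%N then 1
    else if (i.+1 == k)%N then (-1) ^+ (k.-1 - j) * scoord s (k - j)
    else 0.

Definition Pderiv_at_A (R : comRingType) (k : nat) (s : seq R) : 'M[R]_k :=
  \sum_(h < k) (((-1) ^+ h * (k - h)%:R * scoord s h) *: (companion k s) ^+ (k - h).-1).

(* Nabla: 1-based nabla_{i+1,i} = i; 0-based nabla (j+1) j = j+1. *)
Definition nabla (R : ringType) (k : nat) : 'M[R]_k :=
  \matrix_(i < k, j < k) if (i == j.+1 :> nat)%N then (j.+1)%:R else 0.

(* Partial derivative with respect to the last coordinate s_k of a
   matrix-valued polynomial function F of s, evaluated at s:
   we replace s_k by the indeterminate 'X (keeping s_1..s_{k-1} fixed),
   differentiate each entry in 'X and evaluate at 'X = s_k. *)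
Definition partial_last (R : comRingType) (k : nat)
  (F : seq {poly R} -> 'M[{poly R}]_k) (s : seq R) : 'M[R]_k :=
  let sX := rcons (map polyC (take (size s).-1 s)) 'X in
  map_mx (fun q => (deriv q).[last 0 s]) (F sX).

From mathcomp Require Import all_boot all_order all_algebra.
From mathcomp Require Import complex reals.
From mathcomp Require Import zify ring.

Set Implicit Arguments.
Unset Strict Implicit.
Unset Printing Implicit Defensive.

Import GRing.Theory.
Local Open Scope ring_scope.

(* Write A = A(s), N = nabla, P = P'_s(A), and E for the matrix unit at (k, 1).
   Since A is a companion matrix, a direct computation gives N A - A N + 1 = E P,
   and since A_{k,1} = (-1)^(k-1) s_k is the only entry of A involving s_k,
   delta := (-1)^(k-1) d/ds_k is a derivation with delta A = E.  As P is a
   polynomial in A it commutes with A, and expanding A^p telescopically,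
     N A^p - A^p N + p A^(p-1) = sum_i A^i (N A - A N + 1) A^(p-1-i)
                              = sum_i A^i (delta A) A^(p-1-i) P = delta (A^p) P. *)

Section CommutatorPowers.
Variable T : pzRingType.

Lemma commutator_exprS (N A : T) p :
  N * A ^+ p.+1 - A ^+ p.+1 * N + A ^+ p *+ p.+1
  = (N * A ^+ p - A ^+ p * N + A ^+ p.-1 *+ p) * A + A ^+ p * (N * A - A * N + 1).
Proof.
have powS : A ^+ p.-1 *+ p * A = A ^+ p *+ p.
  by case: p => [|p]; rewrite ?mulr0n ?mul0r // mulrnAl -exprSr.
rewrite !(mulrDl, mulrDr, mulNr, mulrN, mulr1) powS !mulrA -[N * _ * A]mulrA -!exprSr.
by rewrite [RHS]addrACA subrKA mulrSr.
Qed.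

Variables (S : pzRingType) (ev : {rmorphism S -> T}) (D : S -> T).
Hypothesis DM : forall x y, D (x * y) = D x * ev y + ev x * D y.

Lemma derivation1 : D 1 = 0.
Proof.
have := DM 1 1; rewrite mul1r rmorph1 mulr1 mul1r.
by move=> /(congr1 (fun x => x - D 1)); rewrite subrr addrK => <-.
Qed.

Lemma derivation_exprS b p : D (b ^+ p.+1) = D (b ^+ p) * ev b + ev b ^+ p * D b.
Proof. by rewrite exprSr DM rmorphXn. Qed.

Lemma commutator_exprn (N P : T) (b : S) p :
  GRing.comm P (ev b) -> N * ev b - ev b * N + 1 = D b * P ->
  N * ev b ^+ p - ev b ^+ p * N + ev b ^+ p.-1 *+ p = D (b ^+ p) * P.
Proof.
move=> commPb Db; elim: p => [|p IHp].
  by rewrite expr0 mulr1 mul1r subrr add0r derivation1 mul0r.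
by rewrite commutator_exprS IHp Db derivation_exprS mulrDl -!mulrA commPb.
Qed.
End CommutatorPowers.

Lemma mul_delta_mxE (R : pzSemiRingType) m n p (i0 : 'I_m) (j0 : 'I_n)
    (M : 'M[R]_(n, p)) i j :
  (delta_mx i0 j0 *m M) i j = (i == i0)%:R * M j0 j.
Proof.
rewrite mxE (bigD1 j0) //= big1 ?addr0 => [|l /negPf l_j0]; rewrite mxE ?l_j0.
  by rewrite eqxx andbT.
by rewrite andbF mul0r.
Qed.

Lemma scoord_map (R S : nzRingType) (f : {rmorphism R -> S}) t h :
  f (scoord t h) = scoord (map f t) h.
Proof.
rewrite /scoord -(rmorph1 f) -/(map f (1 :: t)).
have [lt_h|le_h] := ltnP h (size (1 :: t)); first by rewrite (nth_map 0).
by rewrite !nth_default ?size_map ?rmorph0.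
Qed.

Lemma map_companion (R S : nzRingType) (f : {rmorphism R -> S}) k t :
  map_mx f (companion k t) = companion k (map f t).
Proof.
apply/matrixP => i j; rewrite !mxE.
case: ifP => _; [|case: ifP => _]; rewrite ?rmorph1 ?rmorph0 //.
by rewrite rmorphM rmorph_sign scoord_map.
Qed.

Lemma Pderiv_at_A_comm (R : comNzRingType) k (s : seq R) :
  GRing.comm (Pderiv_at_A k s) (companion k s).
Proof.
rewrite /GRing.comm mulr_suml mulr_sumr; apply: eq_bigr => h _.
by rewrite -!mulmxE -scalemxAl -scalemxAr !mulmxE -exprSr exprS.
Qed.

Section CompanionNabla.
Variables (R : comNzRingType) (n : nat) (s : seq R).
Local Notation A := (companion n.+1 s).
Local Notation N := (nabla R n.+1).

Lemma row_companion (i : 'I_n.+1) (lt_i_n : (i.+1 < n.+1)%N) :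
  row i A = delta_mx 0 (Ordinal lt_i_n).
Proof.
apply/rowP => j; rewrite !mxE eqxx -val_eqE /= eq_sym.
by case: eqP => // _; rewrite (ltn_eqF lt_i_n).
Qed.

Lemma row0_companion_exp m (lt_m_n : (m < n.+1)%N) :
  row 0 (A ^+ m) = delta_mx 0 (Ordinal lt_m_n).
Proof.
elim: m lt_m_n => [|m IHm] lt_m_n; first by rewrite row1; congr delta_mx; apply: val_inj.
rewrite exprSr -mulmxE row_mul (IHm (ltnW lt_m_n)) -rowE row_companion.
by congr delta_mx; apply: val_inj.
Qed.

Lemma Pderiv_at_A_row0 j :
  Pderiv_at_A n.+1 s 0 j = (-1) ^+ (n - j) * j.+1%:R * scoord s (n - j).
Proof.
have exp_entry (h : 'I_n.+1) : (A ^+ (n.+1 - h).-1) 0 j = (h == rev_ord j)%:R.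
  have lt_h : ((n.+1 - h).-1 < n.+1)%N by lia.
  have := congr1 (fun v : 'rV_n.+1 => v 0 j) (row0_companion_exp lt_h).
  rewrite !mxE /= => ->; rewrite -!val_eqE /=; congr (_%:R); move: (ltn_ord h) (ltn_ord j); lia.
rewrite /Pderiv_at_A (summxE _ _ _ 0 j) (bigD1 (rev_ord j)) //= big1 ?addr0 => [|h /negPf h_j].
  rewrite mxE (exp_entry (rev_ord j)) eqxx mulr1 /=.
  by congr ((-1) ^+ _ * _%:R * scoord s _); move: (ltn_ord j); lia.
by rewrite mxE exp_entry h_j mulr0.
Qed.

Lemma nabla_mul_companion : N *m A = diag_mx (\row_(i < n.+1) i%:R).
Proof.
apply/matrixP => -[[|i] lt_i_n] j; rewrite !mxE.
  by rewrite mul0rn big1 // => l _; rewrite mxE mul0r.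
rewrite (bigD1 (Ordinal (ltnW lt_i_n))) //= big1 ?addr0 => [|l].
  by rewrite !mxE /= eqxx (ltn_eqF lt_i_n) -val_eqE /=; case: eqP; rewrite ?mulr1 ?mulr0.
by rewrite mxE -val_eqE /= eqSS eq_sym => /negPf->; rewrite mul0r.
Qed.

Lemma mulmx_nablaE m (M : 'M[R]_(m, n.+1)) i j :
  (M *m N) i j = (j < n)%N%:R * j.+1%:R * M i (inord j.+1).
Proof.
rewrite mxE; case: ltnP => [lt_j_n|le_n_j].
  rewrite (bigD1 (inord j.+1)) //= big1 ?addr0 => [|l].
    by rewrite mxE inordK // eqxx mul1r mulrC.
  by rewrite mxE -val_eqE /= inordK // => /negPf->; rewrite mulr0.
rewrite !mul0r big1 // => l _; rewrite mxE ifF ?mulr0 //; move: (ltn_ord l); lia.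
Qed.

Lemma companion_commutator :
  N *m A - A *m N + 1%:M = delta_mx ord_max 0 *m Pderiv_at_A n.+1 s.
Proof.
apply/matrixP => i j; rewrite mul_delta_mxE Pderiv_at_A_row0 nabla_mul_companion.
rewrite mxE [X in X + _]mxE [X in _ + X + _]mxE mulmx_nablaE !mxE.
have [lt_j_n | le_n_j] := ltnP j n; last first.
  have -> : j = ord_max by apply: val_inj => /=; move: (ltn_ord j) le_n_j; lia.
  rewrite /= !mul0r subr0 subnn expr0 mul1r mulr1 /=.
  by case: eqP => [->|_]; rewrite ?mulr1n ?mul1r ?natr1 // mulr0n mul0r addr0.
rewrite /= mul1r inordK // eqSS.
have [-> | ne_i_max] := eqVneq i ord_max.
  have -> : (ord_max == j) = false by rewrite -val_eqE /= gtn_eqF.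
  rewrite /= eqxx (gtn_eqF lt_j_n) /= subSS.
  have -> : (n - j = (n - j.+1).+1)%N by lia.
  by rewrite exprS mulr0n; ring.
have lt_i_n : (i < n)%N by move: ne_i_max (ltn_ord i); rewrite -val_eqE /=; lia.
rewrite eqSS (ltn_eqF lt_i_n) mul0r -val_eqE /=.
by case: eqP => [->|_]; rewrite ?mulr1n ?mulr0n ?mulr1 ?mulr0 -?natr1; ring.
Qed.

End CompanionNabla.

Section MatrixDerivative.
Variable R : comNzRingType.

Definition deriv_mx_at (c : R) m n (M : 'M[{poly R}]_(m, n)) : 'M[R]_(m, n) :=
  map_mx (fun q => q^`().[c]) M.

Lemma deriv_mx_atM c m n p (M : 'M_(m, n)) (M' : 'M_(n, p)) :
  deriv_mx_at c (M *m M') =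
  deriv_mx_at c M *m map_mx (horner_eval c) M' + map_mx (horner_eval c) M *m deriv_mx_at c M'.
Proof.
apply/matrixP => i j; rewrite !mxE -big_split raddf_sum horner_sum /=.
by apply: eq_bigr => l _; rewrite !mxE derivM hornerD !hornerM.
Qed.

Definition free_last (s : seq R) : seq {poly R} :=
  rcons (map polyC (take (size s).-1 s)) 'X.

Lemma partial_lastE k (F : seq {poly R} -> 'M_k) s :
  partial_last F s = deriv_mx_at (last 0 s) (F (free_last s)).
Proof. by []. Qed.

Lemma map_horner_free_last s :
  s != [::] -> map (horner_eval (last 0 s)) (free_last s) = s.
Proof.
case/lastP: s => // t x _; rewrite /free_last size_rcons -cats1 take_size_cat //.
rewrite map_rcons -map_comp last_cat /= horner_evalE hornerX cats1.
by congr rcons; rewrite -[RHS]map_id; apply: eq_map => y /=; rewrite horner_evalE hornerC.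
Qed.

Lemma deriv_nth_free_last s h : ((free_last s)`_h)^`() = (h == (size s).-1)%:R.
Proof.
rewrite nth_rcons size_map size_take_min (minn_idPl (leq_pred _)).
have [lt_h|ge_h] := ltnP.
  by rewrite (nth_map 0) ?size_take_min ?(minn_idPl (leq_pred _)) // derivC ltn_eqF.
by case: eqP => _; rewrite ?derivX // -polyC0 derivC.
Qed.

End MatrixDerivative.

Lemma horner_companion_free_last (R : comNzRingType) k (s : seq R) :
  s != [::] ->
  map_mx (horner_eval (last 0 s)) (companion k (free_last s)) = companion k s.
Proof. by move=> s_neq0; rewrite map_companion map_horner_free_last. Qed.

Lemma deriv_companion_free_last (R : comNzRingType) n (s : seq R) :
  size s = n.+1 ->
  deriv_mx_at (last 0 s) (companion n.+1 (free_last s)) = (-1) ^+ n *: delta_mx ord_max 0.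
Proof.
move=> size_s; apply/matrixP => i j; rewrite !mxE.
case: ifP => [/eqP i_j | _].
  by rewrite -polyC1 derivC horner0 -!val_eqE /= -i_j andbF mulr0.
case: ifP => [/eqP[] i_n | i_n]; last first.
  by rewrite -polyC0 derivC horner0 -val_eqE /= -(eqSS i n) i_n mulr0.
have -> : i == ord_max by rewrite -val_eqE /= i_n.
rewrite -(rmorph_sign (@polyC R)) mul_polyC derivZ hornerZ /scoord subSn ?leq_ord //=.
rewrite deriv_nth_free_last size_s -polyC_natr hornerC /= -val_eqE /=.
case: j => -[|j] lt_j /=; first by rewrite subn0 eqxx.
by rewrite (_ : (n - j.+1 == n)%N = false) ?mulr0 //; apply/negbTE/eqP; lia.
Qed.

Theorem mainTheorem9 (R : realType) (k : nat) (hk : (2 <= k)%N)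
  (p : nat) (hp : (1 <= p)%N) (s : seq R[i]) (hs : size s = k) :
  nabla R[i] k *m (companion k s) ^+ p - (companion k s) ^+ p *m nabla R[i] k
    + p%:R *: (companion k s) ^+ p.-1
  = (-1) ^+ k.-1 *:
      (partial_last (fun t : seq {poly R[i]} => (companion k t) ^+ p) s
       *m Pderiv_at_A k s).
Proof.
case: k hk hs => // n _ size_s; have s_neq0 : s != [::] by rewrite -size_eq0 size_s.
set c := last 0 s; set B := companion n.+1 (free_last s).
pose D (M : 'M[{poly R[i]}]_n.+1) := (-1) ^+ n *: deriv_mx_at c M.
have DM M M' : D (M * M') = D M * map_mx (horner_eval c) M' + map_mx (horner_eval c) M * D M'.
  by rewrite /D -!mulmxE deriv_mx_atM scalerDr -scalemxAl -scalemxAr.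
have DB : D B = delta_mx ord_max 0.
  by rewrite /D deriv_companion_free_last // scalerA -expr2 sqrr_sign scale1r.
rewrite partial_lastE -/c -/B scaler_nat /= scalemxAl !mulmxE.
rewrite -(horner_companion_free_last n.+1 s_neq0) -/c -/B.
apply: (commutator_exprn DM); rewrite /= horner_companion_free_last //.
  exact: Pderiv_at_A_comm.
by rewrite DB -!mulmxE companion_commutator.
Qed.
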